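(* Let $X$ be a separable Banach space over $\mathbb{K}\in\{\mathbb{R},\mathbb{C}\}$ and $T\colon X\to X$ a bounded linear operator. If there exists a uniformly Li-Yorke scrambled subset of $X$ which has the Baire property and is of second category, then the whole space $X$ is uniformly Li-Yorke scrambled for $T$.
   Context: A subset $S\subset X$ with at least two points is uniformly Li-Yorke scrambled for $T$ if there exist sequences $\{p_n\}$, $\{q_n\}$ in $\mathbb{N}$ such that for all distinct $x,y\in S$: $\lim_n\|T^{p_n}x-T^{p_n}y\|=0$ and $\lim_n\|T^{q_n}x-T^{q_n}y\|=\infty$. A set is of first category if its complement contains a dense $G_\delta$ set, and of second category otherwise. Sets with the Baire property form the smallest $\sigma$-algebra containing all open sets and all sets of first category. *)

From HB Require Import structures.
From mathcomp Require Import all_boot all_order all_algebra.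
From mathcomp Require Import all_classical all_reals all_analysis.
Set Implicit Arguments. Unset Strict Implicit. Unset Printing Implicit Defensive.
Import Order.TTheory GRing.Theory Num.Theory.
Import numFieldNormedType.Exports.
Local Open Scope classical_set_scope.
Local Open Scope ring_scope.

Definition separable_space (T : topologicalType) : Prop :=
  exists D : set T, countable D /\ dense D.

Definition bounded_operator (R : realType) (X : normedModType R)
  (T : X -> X) : Prop :=
  exists M : R, forall x : X, `|T x| <= M * `|x|.

Definition G_delta (T : topologicalType) (G : set T) : Prop :=
  exists U : nat -> set T, (forall n, open (U n)) /\ G = \bigcap_n U n.

Definition first_category (T : topologicalType) (A : set T) : Prop :=
  exists G : set T, G_delta G /\ dense G /\ G `<=` ~` A.

Definition second_category (T : topologicalType) (A : set T) : Prop :=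
  ~ first_category A.

Definition baire_property (T : topologicalType) (A : set T) : Prop :=
  <<s [set B | open B \/ first_category B] >> A.

Definition uniformly_LY_scrambled (R : realType) (X : normedModType R)
  (T : X -> X) (S : set X) : Prop :=
  (exists x y, S x /\ S y /\ x <> y) /\
  exists p q : nat -> nat,
    forall x y, S x -> S y -> x <> y ->
      ((fun n => `|iter (p n) T x - iter (p n) T y|) @ \oo --> (0 : R)) /\
      ((fun n => `|iter (q n) T x - iter (q n) T y|) @ \oo --> +oo).

(* Pettis' theorem: a second category set S with the Baire property coincides
   with a nonempty open set U on a dense G_delta set G, and for small z the
   dense G_delta sets G and G + z meet inside U, so S - S is a neighbourhood
   of 0. Hence every vector is a positive multiple of a difference x - y of
   points of S, and by linearity of T the orbit distances of any pair of
   vectors are a fixed multiple of those of a scrambled pair: the sequences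
   (p_n) and (q_n) witnessing that S is scrambled work for the whole space. *)

From HB Require Import structures.
From mathcomp Require Import all_boot all_order all_algebra.
From mathcomp Require Import all_classical all_reals all_analysis.
From mathcomp Require Import lra.
Import Order.TTheory GRing.Theory Num.Theory.
Import numFieldNormedType.Exports.
Local Open Scope classical_set_scope.
Local Open Scope ring_scope.

Section DenseGdelta.
Context {T : topologicalType}.

Definition dense_Gdelta (G : set T) := G_delta G /\ dense G.

Definition open_on_dense_Gdelta (A : set T) :=
  exists U G, open U /\ dense_Gdelta G /\ A `&` G = U `&` G.

Lemma dense_subset (A B : set T) : A `<=` B -> dense A -> dense B.
Proof.
move=> AB dA O O0 oO; have [x [Ox Ax]] := dA O O0 oO.
by exists x; split=> //; exact: AB.
Qed.

Lemma open_dense_Gdelta (O : set T) : open O -> dense O -> dense_Gdelta O.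
Proof.
by move=> oO dO; split=> //; exists (fun=> O); split=> //; rewrite bigcap_const.
Qed.

Lemma dense_GdeltaT : dense_Gdelta setT.
Proof. by apply: open_dense_Gdelta; [exact: openT | move=> O [x Ox] _; exists x]. Qed.

Lemma dense_open_exterior (U : set T) : open U -> dense (U `|` ~` closure U).
Proof.
move=> oU O [x Ox] oO.
have [[y [Oy Uy]]|OU0] := pselect (O `&` U !=set0); first by exists y; split=> //; left.
exists x; split=> //; right=> /(_ O (open_nbhs_nbhs (conj oO Ox))) [y [Uy Oy]].
by apply: OU0; exists y.
Qed.

End DenseGdelta.

Section Translation.
Context {R : numFieldType} {X : normedModType R}.

Lemma open_translate (O : set X) (c : X) : open O -> open [set y | O (y + c)].
Proof.
move=> oO; have -> : [set y | O (y + c)] = (+%R^~ c) @^-1` O by [].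
by apply: open_comp => // y _; apply: cvgD; [exact: cvg_id | exact: cvg_cst].
Qed.

Lemma dense_translate (D : set X) (c : X) : dense D -> dense [set y | D (y + c)].
Proof.
move=> dD O [x Ox] oO.
have [y [/= Oy Dy]] : [set y | O (y - c)] `&` D !=set0.
  by apply: dD; [exists (x + c); rewrite /= addrK | exact: open_translate].
by exists (y - c); split=> //=; rewrite subrK.
Qed.

Lemma nbhs0_absorbing (N : set X) :
  nbhs 0 N -> forall z : X, exists2 c : R, 0 < c & N (c *: z).
Proof.
move=> /nbhs_ballP[r r0 rN] z.
have z1 : 0 < `|z| + 1 by rewrite ltr_wpDl.
exists (r / (`|z| + 1)); first by rewrite divr_gt0.
apply: rN; rewrite -ball_normE /= sub0r normrN normrZ gtr0_norm ?divr_gt0 //.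
by rewrite mulrAC ltr_pdivrMr // ltr_pM2l // ltrDl.
Qed.

End Translation.

Section BaireSpace.
Context {R : realType} {X : completeNormedModType R}.

Lemma dense_Gdelta_bigcap (G : nat -> set X) :
  (forall k, dense_Gdelta (G k)) -> dense_Gdelta (\bigcap_k G k).
Proof.
move=> dG.
have /choice[V GV] : forall k, exists V : nat -> set X,
    (forall n, open (V n)) /\ G k = \bigcap_n V n.
  by move=> k; have [[V [oV ->]] _] := dG k; exists V.
have GV_sub k n : G k `<=` V k n by rewrite (proj2 (GV k)) => x /(_ n I).
pose W m := let: kn := odflt (0, 0)%N (unpickle m) in V kn.1 kn.2.
have GW : \bigcap_k G k = \bigcap_m W m.
  apply/seteqP; split=> [x Gx m _|x Wx k _]; first exact/GV_sub/Gx.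
  rewrite (proj2 (GV k)) => n _.
  by have := Wx (pickle (k, n)) I; rewrite /W pickleK.
have oW m : open (W m) by exact: (proj1 (GV _)).
have dW m : dense (W m) by exact: dense_subset (GV_sub _ _) (proj2 (dG _)).
by rewrite GW; split; [exists W | exact: Baire].
Qed.

Lemma dense_GdeltaI (A B : set X) :
  dense_Gdelta A -> dense_Gdelta B -> dense_Gdelta (A `&` B).
Proof.
move=> dA dB; have -> : A `&` B = \bigcap_k (if k is 0 then A else B)%N.
  apply/seteqP; split=> [x [Ax Bx] [|k] _ //|x ABx].
  by split; [exact: (ABx 0%N) | exact: (ABx 1%N)].
by apply: dense_Gdelta_bigcap => -[].
Qed.

Lemma dense_Gdelta_translate (G : set X) (c : X) :
  dense_Gdelta G -> dense_Gdelta [set y | G (y + c)].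
Proof.
move=> [[V [oV ->]] dG].
have -> : [set y | (\bigcap_n V n) (y + c)] = \bigcap_n [set y | V n (y + c)] by [].
apply: dense_Gdelta_bigcap => n; apply: open_dense_Gdelta; first exact: open_translate.
by apply: dense_translate; apply: dense_subset dG => x /(_ n I).
Qed.

Lemma open_on_dense_Gdelta0 : open_on_dense_Gdelta (@set0 X).
Proof. by exists set0, setT; split; [exact: open0 | split; [exact: dense_GdeltaT|]]. Qed.

(* Off the nowhere dense boundary of U, the complement of U is the open set
   ~` closure U. *)
Lemma open_on_dense_GdeltaC (A : set X) :
  open_on_dense_Gdelta A -> open_on_dense_Gdelta (~` A).
Proof.
move=> [U [G [oU [dG AG]]]].
have oclU : open (~` closure U) by rewrite openC; exact: closed_closure.
exists (~` closure U), (G `&` (U `|` ~` closure U)); split=> //; split.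
  by apply: dense_GdeltaI => //; apply: open_dense_Gdelta;
    [exact: openU | exact: dense_open_exterior].
have AG_U v : A v -> G v -> U v by move=> Av Gv; have /[!AG] -[] : (A `&` G) v.
have UG_A v : U v -> G v -> A v by move=> Uv Gv; have /[!(esym AG)] -[] : (U `&` G) v.
apply/seteqP; split=> x [Ax [Gx [Ux|clUx]]].
- by case: Ax; exact: UG_A.
- by split=> //; split=> //; right.
- by case: Ax; exact: subset_closure.
- split; last by split=> //; right.
  by move=> /AG_U /(_ Gx) /subset_closure.
Qed.

Lemma open_on_dense_Gdelta_bigcup (A : nat -> set X) :
  (forall n, open_on_dense_Gdelta (A n)) -> open_on_dense_Gdelta (\bigcup_n A n).
Proof.
move=> AUG; have /choice[UG HUG] : forall n, exists UG : set X * set X,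
    open UG.1 /\ dense_Gdelta UG.2 /\ A n `&` UG.2 = UG.1 `&` UG.2.
  by move=> n; have [U [G UG]] := AUG n; exists (U, G).
exists (\bigcup_n (UG n).1), (\bigcap_n (UG n).2); split.
  by apply: bigcup_open => n _; exact: (proj1 (HUG n)).
split; first by apply: dense_Gdelta_bigcap => n; exact: (proj1 (proj2 (HUG n))).
have AUn n : A n `&` (UG n).2 = (UG n).1 `&` (UG n).2 := proj2 (proj2 (HUG n)).
apply/seteqP; split=> x [[n _ Ax] Gx]; split=> //; exists n => //.
- by have /[!AUn] -[] : (A n `&` (UG n).2) x by split=> //; exact: Gx.
- by have /[!(esym (AUn n))] -[] : ((UG n).1 `&` (UG n).2) x by split=> //; exact: Gx.
Qed.

Lemma baire_property_open_on_dense_Gdelta (A : set X) :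
  baire_property A -> open_on_dense_Gdelta A.
Proof.
have sigma_open_on_dense_Gdelta : sigma_algebra setT (@open_on_dense_Gdelta X).
  split; [exact: open_on_dense_Gdelta0 | | exact: open_on_dense_Gdelta_bigcup].
  by move=> B; rewrite setTD; exact: open_on_dense_GdeltaC.
apply: (smallest_sub sigma_open_on_dense_Gdelta) => B [oB|[G [gG [dG GB]]]].
  by exists B, setT; split=> //; split; [exact: dense_GdeltaT|].
exists set0, G; split; first exact: open0.
split=> //; rewrite set0I; apply/seteqP; split=> x // [Bx Gx]; exact: GB Gx Bx.
Qed.

Theorem pettis (S : set X) : baire_property S -> second_category S ->
  nbhs 0 [set x - y | x in S & y in S].
Proof.
move=> /baire_property_open_on_dense_Gdelta[U [G [oU [dG SG]]]] S2.
have SUG v : U v -> G v -> S v by move=> Uv Gv; have /[!(esym SG)] -[] : (U `&` G) v.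
have [[a Ua]|U0] := pselect (U !=set0); last first.
  exfalso; apply: S2; exists G; split; [exact: dG.1 | split; [exact: dG.2|]] => x Gx Sx.
  by apply: U0; exists x; have /[!SG] -[] : (S `&` G) x.
have /nbhs_ballP[r /= r0 aU] : nbhs a U by exact: open_nbhs_nbhs.
apply/nbhs_ballP; exists (r / 2); first by rewrite /= divr_gt0.
move=> z; rewrite -ball_normE /= sub0r normrN => zr.
have [y [ay [Gy Gyz]]] : ball a (r / 2) `&` (G `&` [set y | G (y - z)]) !=set0.
  apply: (proj2 (dense_GdeltaI _ _ dG (dense_Gdelta_translate _ (- z) dG))).
    by exists a; apply: ballxx; rewrite divr_gt0.
  exact: ball_open.
move: ay; rewrite -ball_normE /= => ay.
exists y; first by apply: SUG => //; apply: aU; rewrite -ball_normE /=; lra.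
exists (y - z); last by rewrite opprB addrC subrK.
apply: SUG => //; apply: aU; rewrite -ball_normE /= opprB addrCA.
by rewrite (le_lt_trans (ler_normD _ _)) //; lra.
Qed.

End BaireSpace.

Section IteratedLinear.
Context {R : pzRingType} {V : lmodType R} (T : {linear V -> V}).

Lemma iter_linearB k (a b : V) : iter k T (a - b) = iter k T a - iter k T b.
Proof. by elim: k => //= k ->; rewrite linearB. Qed.

Lemma iter_linearZ k (c : R) (a : V) : iter k T (c *: a) = c *: iter k T a.
Proof. by elim: k => //= k ->; rewrite linearZ. Qed.

End IteratedLinear.

Section Scrambled.
Context {R : realType} {X : normedModType R} (T : {linear X -> X}).

Lemma uniformly_LY_scrambled_setT (S : set X) :
  uniformly_LY_scrambled T S ->
  (forall z : X, exists2 c : R, 0 < c & [set x - y | x in S & y in S] (c *: z)) ->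
  uniformly_LY_scrambled T setT.
Proof.
move=> [[x0 [y0 [_ [_ xy0]]]] [p [q Spq]]] Sdiff.
split; first by exists x0, y0.
exists p, q => x y _ _ /eqP xy.
have [c c0 [a Sa [b Sb abxy]]] := Sdiff (x - y).
have ab : a <> b.
  by move=> eab; move: abxy; rewrite eab subrr => /esym/eqP;
    rewrite scaler_eq0 subr_eq0 (negPf xy) gt_eqF.
have dist_xy k : `|iter k T x - iter k T y| = c^-1 * `|iter k T a - iter k T b|.
  by rewrite -!iter_linearB abxy iter_linearZ normrZ gtr0_norm // mulKf ?gt_eqF.
have [ab0 aby] := Spq a b Sa Sb ab.
split; under eq_fun do rewrite dist_xy.
  by rewrite -(mulr0 c^-1); exact: cvgMl_tmp.
apply/cvgryPge => A; apply: filterS (cvgry_ge aby (c * A)) => n.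
by rewrite ler_pdivlMl.
Qed.

End Scrambled.

Theorem corollary3p13 (R : realType) (X : completeNormedModType R)
  (T : {linear X -> X}) :
  separable_space X ->
  bounded_operator T ->
  (exists S : set X,
      uniformly_LY_scrambled T S /\ baire_property S /\ second_category S) ->
  uniformly_LY_scrambled T setT.
Proof.
move=> _ _ [S [scrambledS [baireS S2]]].
apply: (uniformly_LY_scrambled_setT _ _ scrambledS).
by apply: nbhs0_absorbing; exact: pettis.
Qed.
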